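(* Let $\mathcal C$ be a class of colorings that has the refinement property. Then for every hypergraph $H$ with $n\ge1$ vertices, $\mathrm{ch}_{\mathcal C}(H)\le\chi_{\mathcal C}(H)\cdot\ln n+1$.
   Context: A class of colorings $\mathcal C$ specifies, for each hypergraph $H=(V,\mathcal E)$, a set of colorings $V\to\mathbb Z_{>0}$ called $\mathcal C$-colorings of $H$. A coloring $C'$ is a refinement of a coloring $C$ if $C(x)\ne C(y)$ implies $C'(x)\ne C'(y)$. $\mathcal C$ has the refinement property if every refinement of a $\mathcal C$-coloring of $H$ is also a $\mathcal C$-coloring of $H$. $\chi_{\mathcal C}(H)$ is the minimum number of colors used by a $\mathcal C$-coloring of $H$ (assumed to exist). $\mathrm{ch}_{\mathcal C}(H)$ is the minimum $k$ such that for every family $\{L_v\}_{v\in V}$ of sets of positive integers with $|L_v|\ge k$, there is a $\mathcal C$-coloring $C$ of $H$ with $C(v)\in L_v$ for all $v$. *)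

From Stdlib Require Import Reals.
From mathcomp Require Import all_boot.
Set Implicit Arguments. Unset Strict Implicit. Unset Printing Implicit Defensive.

(* A hypergraph is H = (V, E) with V : finType and E : {set {set V}}. *)

Definition is_coloring (V : finType) (c : V -> nat) : Prop := forall v, 0 < c v.

Definition coloring_class :=
  forall (V : finType), {set {set V}} -> (V -> nat) -> Prop.

Definition class_wf (C : coloring_class) : Prop :=
  forall (V : finType) (E : {set {set V}}) (c : V -> nat),
    C V E c -> is_coloring c.

Definition refines (V : finType) (c' c : V -> nat) : Prop :=
  forall x y, c x <> c y -> c' x <> c' y.

Definition refinement_property (C : coloring_class) : Prop :=
  forall (V : finType) (E : {set {set V}}) (c c' : V -> nat),
    C V E c -> is_coloring c' -> refines c' c -> C V E c'.

Definition num_colors (V : finType) (c : V -> nat) : nat :=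
  size (undup [seq c x | x <- enum V]).

Definition is_chi (C : coloring_class) (V : finType) (E : {set {set V}}) (k : nat)
  : Prop :=
  (exists c, C V E c /\ num_colors c = k) /\
  (forall c, C V E c -> k <= num_colors c).

Definition list_of_size_ge (L : nat -> Prop) (k : nat) : Prop :=
  (forall x, L x -> 0 < x) /\
  exists s : seq nat, uniq s /\ k <= size s /\ (forall x, x \in s -> L x).

Definition choosable (C : coloring_class) (V : finType) (E : {set {set V}}) (k : nat)
  : Prop :=
  forall L : V -> nat -> Prop,
    (forall v, list_of_size_ge (L v) k) ->
    exists c, C V E c /\ forall v, L v (c v).

Definition is_ch (C : coloring_class) (V : finType) (E : {set {set V}}) (m : nat)
  : Prop :=
  choosable C E m /\ (forall k, choosable C E k -> m <= k).

From Stdlib Require Import Reals Lra ZArith.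
From mathcomp Require Import all_boot.
Set Implicit Arguments. Unset Strict Implicit. Unset Printing Implicit Defensive.

(* Let c0 be an optimal C-coloring with q classes and give every vertex a list
   of k > q ln n colors.  Map each list entry to one of the q classes uniformly
   at random; a vertex fails when none of its entries lands on its own class,
   which happens with probability (1 - 1/q)^k < 1/n.  By the union bound some
   map lets every vertex pick an entry landing on its class; the coloring so
   obtained refines c0 and is therefore a C-coloring.  The probabilities are
   replaced by counts of maps. *)

Lemma card_seq_sub_mem (T : choiceType) (U s : seq T) :
  uniq s -> {subset s <= U} -> #|[set x : seq_sub U | val x \in s]| = size s.
Proof.
move=> uniq_s sub_sU.
have -> : [set x : seq_sub U | val x \in s] = [set x in pmap insub s].
  by apply/setP => x; rewrite !inE mem_pmap_sub.
rewrite cardsE (card_uniqP (pmap_sub_uniq _ uniq_s)) size_pmap_sub.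
by apply/eqP; rewrite -all_count; apply/allP.
Qed.

Lemma card_ffun_avoiding (T R : finType) (A : {set T}) (r : R) :
  #|[set f : {ffun T -> R} | [forall x in A, f x != r]]|
    = #|R|.-1 ^ #|A| * #|R| ^ (#|T| - #|A|).
Proof.
pose F x : pred R := if x \in A then predC1 r else predT.
have -> : #|[set f : {ffun T -> R} | [forall x in A, f x != r]]| = #|family F|.
  apply: eq_card => f; rewrite inE.
  apply/forall_inP/familyP => [avoid x | fam x xA].
    by rewrite /F; case: ifP => // /avoid.
  by have := fam x; rewrite /F xA.
rewrite card_family foldrE big_map big_enum /= (bigID (mem A)) /=.
rewrite (eq_bigr (fun=> #|R|.-1)) => [|x xA]; last by rewrite /F xA cardC1.
rewrite [X in _ * X](eq_bigr (fun=> #|R|)) => [|x xA]; last first.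
  by rewrite /F (negbTE xA) cardT.
by rewrite !prod_nat_const -(cardC A) addKn.
Qed.

Lemma exists_notin_sets (I T : finType) (B : I -> {set T}) :
  \sum_i #|B i| < #|T| -> exists x, forall i, x \notin B i.
Proof.
move=> small.
suff /existsP[x /forallP outside] : [exists x, [forall i, x \notin B i]].
  by exists x.
apply: contraTT small; rewrite negb_exists -leqNgt => /forallP covered.
rewrite -sum1_card.
have : \sum_(x : T) 1 <= \sum_(x : T) \sum_i (x \in B i).
  apply: leq_sum => x _.
  have := covered x; rewrite negb_forall => /existsP[i /negPn xB].
  by rewrite (bigD1 i) //= xB.
move/leq_trans; apply; rewrite exchange_big /=.
apply: leq_sum => i _; rewrite -sum1_card [X in _ <= X]big_mkcond.
by apply: leq_sum => x _; case: (x \in B i).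
Qed.

Lemma exists_ffun_hitting (I T R : finType) (A : I -> {set T}) (r : I -> R)
    (k : nat) :
  (forall i, #|A i| = k) -> 0 < #|R| -> #|I| * #|R|.-1 ^ k < #|R| ^ k ->
  exists f : {ffun T -> R}, forall i, exists2 x, x \in A i & f x = r i.
Proof.
move=> card_A R_gt0 few.
pose Bad i := [set f : {ffun T -> R} | [forall x in A i, f x != r i]].
have card_Bad i : #|Bad i| = #|R|.-1 ^ k * #|R| ^ (#|T| - k).
  by rewrite card_ffun_avoiding card_A.
have [f good] : exists f, forall i, f \notin Bad i.
  apply: exists_notin_sets; rewrite (eq_bigr _ (fun i _ => card_Bad i)).
  rewrite sum_nat_const card_ffun mulnA.
  have [i0 _ | I0] := pickP I; last first.
    by rewrite eq_card0 // mul0n expn_gt0 R_gt0.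
  have k_le_T : k <= #|T| by rewrite -(card_A i0) max_card.
  by rewrite -{2}(subnKC k_le_T) expnD ltn_pmul2r // expn_gt0 R_gt0.
exists f => i; have := good i; rewrite inE negb_forall_in.
by case/exists_inP => x xA /negPn /eqP; exists x.
Qed.

Lemma choosable_of_coloring (C : coloring_class) (hC : refinement_property C)
    (V : finType) (E : {set {set V}}) (c0 : V -> nat) (k : nat) :
  C V E c0 -> #|V| * (num_colors c0).-1 ^ k < num_colors c0 ^ k ->
  choosable C E k.
Proof.
move=> Cc0 few L Lsize.
have list_of v : exists t : seq nat,
    [/\ uniq t, size t = k & forall x, x \in t -> L v x].
  have [_ [t [uniq_t [k_le_t tL]]]] := Lsize v.
  exists (take k t); split; first exact: take_uniq.
    by rewrite size_take_min; apply/minn_idPl.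
  by move=> x /mem_take; apply: tL.
have [s s_spec] := fin_all_exists list_of.
pose T := seq_sub (flatten [seq s v | v <- enum V]).
pose A v := [set x : T | val x \in s v].
have card_A v : #|A v| = k.
  have [uniq_s size_s _] := s_spec v; rewrite card_seq_sub_mem // => x xs.
  by apply/flattenP; exists (s v) => //; rewrite map_f ?mem_enum.
pose cols := undup [seq c0 v | v <- enum V].
have col_in v : c0 v \in cols by rewrite mem_undup map_f ?mem_enum.
have card_cols : #|{: seq_sub cols}| = num_colors c0.
  exact: card_seq_sub (undup_uniq _).
have [v0 _ | V0] := pickP V; last first.
  by exists c0; split => // v; have := V0 v.
have cols_gt0 : 0 < #|{: seq_sub cols}|.
  by apply/card_gt0P; exists (SeqSub (col_in v0)).
rewrite -card_cols in few.
have [f hit] := exists_ffun_hitting (fun v => SeqSub (col_in v))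
  card_A cols_gt0 few.
have hit_class v : exists x, x \in A v /\ f x = SeqSub (col_in v).
  by have [x xA fx] := hit v; exists x.
have [g g_spec] := fin_all_exists hit_class.
have g_in_s v : val (g v) \in s v by have [] := g_spec v; rewrite inE.
have g_in_L v : L v (val (g v)) by have [_ _ sL] := s_spec v; apply: sL.
exists (fun v => val (g v)); split => //.
apply: (hC _ _ c0) => // [v | x y].
  by case: (Lsize v) => pos _; apply: pos.
apply: contra_not => /val_inj gxy.
have [_ fgx] := g_spec x; have [_ fgy] := g_spec y.
have : SeqSub (col_in x) = SeqSub (col_in y) by rewrite -fgx -fgy gxy.
by move/(congr1 val).
Qed.

Section RealBound.
Local Open Scope R_scope.

Lemma exp_pow_nat (a : R) (k : nat) : exp a ^ k = exp (INR k * a).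
Proof. by rewrite -Rpower_pow; [rewrite /Rpower ln_exp | apply: exp_pos]. Qed.

Lemma INR_expn (a k : nat) : INR (a ^ k)%N = INR a ^ k.
Proof. by elim: k => [|k IH] //; rewrite expnS -multE mult_INR IH. Qed.

(* (1 - 1/q)^k <= exp (-k/q) < 1/n. *)
Lemma mul_pow_pred_lt_pow (n q : R) (k : nat) :
  1 <= n -> 1 <= q -> q * ln n < INR k -> n * (q - 1) ^ k < q ^ k.
Proof.
move=> n_ge1 q_ge1 qlnn_lt_k.
have invq_pos : 0 < / q by apply: Rinv_0_lt_compat; lra.
have invq_le1 : / q <= 1 by rewrite -Rinv_1; apply: Rinv_le_contravar; lra.
have pow_le_exp : (1 - / q) ^ k <= exp (INR k * - / q).
  rewrite -exp_pow_nat; apply: pow_incr; have := exp_ineq1_le (- / q); lra.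
have exp_lt_invn : exp (INR k * - / q) < / n.
  rewrite -[X in _ < / X](exp_ln n); last lra.
  rewrite -exp_Ropp; apply: exp_increasing.
  have : ln n < INR k * / q.
    apply: (Rmult_lt_reg_l q); first lra.
    by have -> : q * (INR k * / q) = INR k by field; lra.
  lra.
have -> : q - 1 = q * (1 - / q) by field; lra.
rewrite Rpow_mult_distr.
have qk_pos : 0 < q ^ k by apply: pow_lt; lra.
apply: (Rle_lt_trans _ (n * (q ^ k * exp (INR k * - / q)))).
  by apply: Rmult_le_compat_l; [lra | apply: Rmult_le_compat_l; lra].
apply: (Rlt_le_trans _ (n * (q ^ k * / n))).
  by apply: Rmult_lt_compat_l; [lra | apply: Rmult_lt_compat_l; lra].
by right; field; lra.
Qed.

Lemma exists_exponent_of_ln (n q : nat) : (0 < n)%N -> (0 < q)%N ->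
  exists k, (n * q.-1 ^ k < q ^ k)%N /\ INR k <= INR q * ln (INR n) + 1.
Proof.
move=> n_gt0 q_gt0.
have n_ge1 : 1 <= INR n by apply: (le_INR 1); apply/leP.
have q_ge1 : 1 <= INR q by apply: (le_INR 1); apply/leP.
set r := INR q * ln (INR n).
have r_ge0 : 0 <= r.
  apply: Rmult_le_pos; first lra.
  case: (Rle_lt_or_eq_dec _ _ n_ge1) => [n_gt1 | <-]; last by rewrite ln_1; lra.
  by rewrite -ln_1; left; apply: ln_increasing; lra.
have [r_lt_up up_le] := archimed r.
have up_ge0 : (0 <= up r)%Z by apply: le_IZR; lra.
have INR_k : INR (Z.to_nat (up r)) = IZR (up r) by rewrite INR_IZR_INZ Z2Nat.id.
exists (Z.to_nat (up r)); rewrite INR_k; split; last lra.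
apply/ltP; apply: INR_lt; rewrite -multE mult_INR !INR_expn.
have -> : INR q.-1 = INR q - 1 by rewrite -{2}(prednK q_gt0) S_INR; ring.
by apply: mul_pow_pred_lt_pow; rewrite ?INR_k.
Qed.
End RealBound.

Lemma num_colors_gt0 (V : finType) (c : V -> nat) :
  0 < #|V| -> 0 < num_colors c.
Proof.
case/card_gt0P=> v _; rewrite /num_colors -has_predT; apply/hasP.
by exists (c v); rewrite ?mem_undup ?map_f ?mem_enum.
Qed.

Theorem theorem6p2 (C : coloring_class) (hwf : class_wf C)
  (hC : refinement_property C)
  (V : finType) (E : {set {set V}}) (hn : 0 < #|V|)
  (chi ch : nat) (hchi : is_chi C E chi) (hch : is_ch C E ch) :
  Rle (INR ch) (Rplus (Rmult (INR chi) (ln (INR #|V|))) (INR 1)).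
Proof.
case: hchi => [[c0 [Cc0 colors_c0]] _]; case: hch => _ ch_min.
have chi_gt0 : 0 < chi by rewrite -colors_c0 num_colors_gt0.
have [k [few k_le]] := exists_exponent_of_ln hn chi_gt0.
rewrite -colors_c0 in few.
have /leP/le_INR ch_le_k := ch_min k (choosable_of_coloring hC Cc0 few).
by rewrite /= in k_le *; lra.
Qed.
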